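(* Let $F:\mathcal{H}\to\mathbb{R}$ be differentiable with $L$-Lipschitz gradient, $\arg\min F\ne\emptyset$, satisfying (PL) with $\mu>0$, and let $x(\cdot)$ be the solution of the heavy ball system with damping $\alpha>0$ and initial point $x_0$. Let $a,\delta\ge0$, $R:=\alpha-a+\delta$, and assume $R>0$, $aR\le2\mu$ and $L-\alpha\delta+\frac\delta2R\le0$. Then for all $t>0$, $$F(x(t))-F_*\le C(t)e^{-mt},\qquad m=\min\{a,R\},$$ where $C(t)=(F(x_0)-F_* )\big(1+\frac{a}{|a-R|}\big)$ if $a\ne R$, and $C(t)=(F(x_0)-F_* )(1+at)$ if $a=R$.
   Context: (PL) with constant $\mu>0$: $F(x)-F_*\le \frac{1}{2\mu}\|\nabla F(x)\|^2$ for all $x$, where $F_*=\min F$. Heavy ball system: $\ddot x(t)+\alpha\dot x(t)+\nabla F(x(t))=0$, $x(0)=x_0$, $\dot x(0)=0$ (unique $C^2$ global solution). *)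

From mathcomp Require Import all_boot all_order all_algebra.
From mathcomp Require Import all_classical all_reals all_analysis.
Set Implicit Arguments. Unset Strict Implicit. Unset Printing Implicit Defensive.
Import Order.TTheory GRing.Theory Num.Theory.
Import numFieldNormedType.Exports.
Local Open Scope ring_scope.

(* [inner] is a real inner product on the normed space H inducing its norm:
   symmetric, linear in the first argument (hence bilinear), and
   <x,x> = |x|^2.  Together with completeness of H this makes H a real
   Hilbert space. *)
Definition is_inner_product (R : realType) (H : normedModType R)
  (inner : H -> H -> R) : Prop :=
  [/\ (forall x y, inner x y = inner y x),
      (forall a x y z, inner (a *: x + y) z = a * inner x z + inner y z)
    & (forall x, inner x x = `|x| ^+ 2)].

Definition Cconst (R : realType) (F0mFs a Rr t : R) : R :=
  if a != Rr then F0mFs * (1 + a / `|a - Rr|)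
  else F0mFs * (1 + a * t).

From mathcomp Require Import all_boot all_order all_algebra.
From mathcomp Require Import all_classical all_reals all_analysis.
From mathcomp Require Import ring lra.
Set Implicit Arguments. Unset Strict Implicit.
Import Order.TTheory GRing.Theory Num.Theory.
Import numFieldNormedType.Exports.
Local Open Scope classical_set_scope.
Local Open Scope ring_scope.

(* With R := alpha - a + delta, the Lyapunov function
     E = a (F(x) - F_* ) + delta/2 |x'|^2 + <grad F(x), x'>
   satisfies E' + R E <= 0: the value of R cancels the terms in <grad F(x), x'>,
   the hypothesis L - alpha delta + delta R / 2 <= 0 absorbs the |x'|^2 terms
   (the Lipschitz bound on grad F controls the derivative of <grad F(x), x'>),
   and (PL) with a R <= 2 mu absorbs a R (F(x) - F_* ) into |grad F(x)|^2.
   Hence e^(R t) E(t) <= E(0) = a (F(x0) - F_* ).  As (F(x))' = <grad F(x), x'>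
   <= E - a (F(x) - F_* ), the product e^(a t) (F(x(t)) - F_* ) grows at most
   like a (F(x0) - F_* ) times a primitive of e^((a - R) s), which yields C(t).
   Since grad F is merely Lipschitz, <grad F(x), x'> need not be differentiable,
   so both comparison steps bound upper right Dini derivatives instead. *)

Section InnerProduct.
Variables (R : realType) (H : normedModType R) (inner : H -> H -> R).
Hypothesis ip : is_inner_product inner.

Lemma innerC x y : inner x y = inner y x. Proof. by case: ip. Qed.

Lemma innerDZl a x y z : inner (a *: x + y) z = a * inner x z + inner y z.
Proof. by case: ip. Qed.

Lemma inner_self x : inner x x = `|x| ^+ 2. Proof. by case: ip. Qed.

Lemma inner0l z : inner 0 z = 0.
Proof. by have := innerDZl 1 0 0 z; rewrite scale1r addr0 mul1r; lra. Qed.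

Lemma innerDl x y z : inner (x + y) z = inner x z + inner y z.
Proof. by rewrite -[x in LHS]scale1r innerDZl mul1r. Qed.

Lemma innerZl a x z : inner (a *: x) z = a * inner x z.
Proof. by rewrite -[_ *: _]addr0 innerDZl inner0l addr0. Qed.

Lemma innerBl x y z : inner (x - y) z = inner x z - inner y z.
Proof. by rewrite innerDl -scaleN1r innerZl mulN1r. Qed.

Lemma innerZr a x z : inner z (a *: x) = a * inner z x.
Proof. by rewrite innerC innerZl innerC. Qed.

Lemma innerBr x y z : inner z (x - y) = inner z x - inner z y.
Proof. by rewrite !(innerC z) innerBl. Qed.

Lemma inner_polar x y : inner x y = (`|x + y| ^+ 2 - `|x - y| ^+ 2) / 4.
Proof.
rewrite -!inner_self !innerBl !innerDl !(innerC _ (x + y)) !(innerC _ (x - y)).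
by rewrite !innerBl !innerDl (innerC y x); field.
Qed.

Lemma inner_increment x x' y y' :
  inner x' y' - inner x y = inner (x' - x) y' + inner x (y' - y).
Proof. by rewrite innerBl innerBr; ring. Qed.

Lemma ler_inner_norm x y : `|inner x y| <= `|x| * `|y|.
Proof.
have [->|x0] := eqVneq x 0; first by rewrite inner0l !normr0 mul0r.
have nx : 0 < `|x| ^+ 2 by rewrite exprn_gt0 // normr_gt0.
rewrite -ler_sqr ?nnegrE ?mulr_ge0 // real_normK ?num_real // exprMn.
(* The quadratic [r |-> |r x + y|^2] is nonnegative at its minimiser. *)
set r := - inner x y / `|x| ^+ 2.
have := inner_self (r *: x + y); rewrite innerDZl !(innerC _ (r *: x + y)) !innerDZl.
rewrite !inner_self (innerC y x) => q.
have : 0 <= `|y| ^+ 2 - inner x y ^+ 2 / `|x| ^+ 2.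
  suff -> : `|y| ^+ 2 - inner x y ^+ 2 / `|x| ^+ 2 = `|r *: x + y| ^+ 2 by [].
  by rewrite -q /r; field; rewrite normr_eq0.
by rewrite subr_ge0 ler_pdivrMr // mulrC.
Qed.

Lemma cvg_inner (T : Type) (F : set_system T) {FF : Filter F} (p q : T -> H) p0 q0 :
  p @ F --> p0 -> q @ F --> q0 -> inner (p s) (q s) @[s --> F] --> inner p0 q0.
Proof.
move=> cp cq; rewrite inner_polar !expr2.
under eq_fun do rewrite inner_polar !expr2.
apply: cvgM; last exact: cvg_cst.
by apply: cvgB; apply: cvgM; apply: cvg_norm; [apply: cvgD|apply: cvgD|apply: cvgB|apply: cvgB].
Qed.

End InnerProduct.

Section RightSlope.
Variable R : realType.

Lemma cvg_right_shift (V : normedModType R) (f : R -> V) t :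
  {for t, continuous f} -> f (h + t) @[h --> 0^'+] --> f t.
Proof.
move=> cf; apply: cvg_at_right_filter.
apply: (@cvg_comp _ _ _ (fun h => h + t) f _ (nbhs t)) => //.
suff : h + t @[h --> (0 : R)] --> 0 + t by rewrite add0r.
by apply: cvgD; [exact: cvg_id | exact: cvg_cst].
Qed.

Lemma derivable1_continuous (V : normedModType R) (f : R -> V) t :
  derivable f t 1 -> {for t, continuous f}.
Proof. by move=> df; apply/differentiable_continuous/derivable1_diffP. Qed.

Lemma cvg_right_quotient (V : normedModType R) (f : R -> V) t :
  derivable f t 1 -> h^-1 *: (f (h + t) - f t) @[h --> 0^'+] --> derive1 f t.
Proof.
move=> df; rewrite derive1E /derive.
under eq_fun do rewrite -[X in f (X + t)]mulr1.
exact: cvg_dnbhs_at_right.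
Qed.

(* [l] bounds the upper right Dini derivative of [f] at [t]; the witness [U]
   replaces the limsup of the right difference quotients. *)
Definition upper_right_slope (f : R -> R) (t l : R) : Prop :=
  exists2 U : R -> R, U h @[h --> 0^'+] --> l &
    forall h, 0 < h -> f (h + t) - f t <= h * U h.

Lemma is_derive_upper_right_slope (f : R -> R) (t l : R) :
  is_derive t 1 f l -> upper_right_slope f t l.
Proof.
move=> fl; exists (fun h => h^-1 * (f (h + t) - f t)).
  have df : derivable f t 1 by exact: ex_derive.
  by have := cvg_right_quotient df; rewrite derive1E derive_val; apply.
by move=> h h0; rewrite mulVKf ?gt_eqF.
Qed.

Lemma upper_right_slope_le (f : R -> R) (t l l' : R) :
  l <= l' -> upper_right_slope f t l -> upper_right_slope f t l'.
Proof.
move=> ll' [U cU fU]; exists (fun h => U h + (l' - l)).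
  suff : U h + (l' - l) @[h --> 0^'+] --> l + (l' - l) by rewrite subrKC; apply.
  by apply: cvgD => //; exact: cvg_cst.
move=> h h0; apply: le_trans (fU h h0) _.
by rewrite mulrDr lerDl mulr_ge0 ?subr_ge0 // ltW.
Qed.

Lemma upper_right_slopeD (f g : R -> R) (t l m : R) :
  upper_right_slope f t l -> upper_right_slope g t m ->
  upper_right_slope (fun s => f s + g s) t (l + m).
Proof.
move=> [U cU fU] [V cV gV]; exists (fun h => U h + V h); first exact: cvgD.
by move=> h h0; rewrite mulrDr; have := fU h h0; have := gV h h0; lra.
Qed.

Lemma upper_right_slopeZ (k : R) (f : R -> R) (t l : R) : 0 <= k ->
  upper_right_slope f t l -> upper_right_slope (fun s => k * f s) t (k * l).
Proof.
move=> k0 [U cU fU]; exists (fun h => k * U h); first by apply: cvgM => //; exact: cvg_cst.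
by move=> h h0; rewrite mulrCA -mulrBr; apply: ler_wpM2l => //; exact: fU.
Qed.

Lemma upper_right_slopeM (e f : R -> R) (t l m : R) :
  (forall s, 0 < e s) -> is_derive t 1 e m -> upper_right_slope f t l ->
  upper_right_slope (fun s => e s * f s) t (e t * l + m * f t).
Proof.
move=> e_gt0 em [U cU fU]; have de : derivable e t 1 by exact: ex_derive.
exists (fun h => e (h + t) * U h + h^-1 * (e (h + t) - e t) * f t).
  apply: cvgD; apply: cvgM.
  - exact/cvg_right_shift/derivable1_continuous.
  - exact: cU.
  - by have := cvg_right_quotient de; rewrite derive1E derive_val; apply.
  - exact: cvg_cst.
move=> h h0; rewrite mulrDr.
have -> : h * (h^-1 * (e (h + t) - e t) * f t) = (e (h + t) - e t) * f t.
  by rewrite !mulrA mulfV ?gt_eqF ?mul1r.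
have := ler_wpM2l (ltW (e_gt0 (h + t))) (fU h h0).
by rewrite mulrCA; lra.
Qed.

Lemma upper_right_slope_lt0 (f : R -> R) (t l : R) :
  upper_right_slope f t l -> l < 0 -> \forall h \near 0^'+, f (h + t) < f t.
Proof.
move=> [U cU fU] l0; have U0 : \forall h \near 0^'+, U h < 0 := cvgr_lt l cU 0 l0.
near=> h; have h0 : 0 < h by near: h; exact: nbhs_right_gt.
rewrite -subr_lt0; apply: le_lt_trans (fU h h0) _.
by rewrite pmulr_rlt0 //; near: h; exact: U0.
Unshelve. all: by end_near.
Qed.

Lemma last_nonpos_point (psi : R -> R) (a b : R) : continuous psi ->
  a <= b -> psi a <= 0 -> 0 < psi b ->
  exists s0, [/\ a <= s0 < b, psi s0 <= 0 & forall s, s0 < s <= b -> 0 < psi s].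
Proof.
move=> cpsi ab psia psib.
pose S := [set s | a <= s <= b /\ psi s <= 0].
have Sa : S a by rewrite /S /= lexx ab.
have hS : has_sup S by split; [exists a | exists b => s [/andP[]]].
have as0 : a <= sup S by exact: sup_upper_bound.
have s0b : sup S <= b by apply: ge_sup; [exists a | move=> s [/andP[]]].
have ps0 : psi (sup S) <= 0.
  rewrite leNgt; apply/negP => ps0.
  have : \forall s \near sup S, 0 < psi s by exact: (cvgr_gt _ (cpsi (sup S))).
  case/nbhs_ballP => e e0 pos.
  have [s Ss es] := sup_adherent e0 hS.
  have Bs : ball (sup S) e s.
    have sS : s <= sup S by exact: sup_upper_bound hS _ Ss.
    by rewrite /ball /= ger0_norm ?subr_ge0 //; lra.
  by have := pos _ Bs; rewrite ltNge Ss.2.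
exists (sup S); split => //.
  by rewrite as0 lt_neqAle s0b andbT; apply: contraTneq psib => <-; rewrite -leNgt.
move=> s /andP[s0s sb]; rewrite ltNge; apply/negP => psis.
have Ss : S s by split; rewrite ?sb ?andbT ?(le_trans as0 (ltW s0s)).
by move: s0s; rewrite ltNge sup_upper_bound.
Qed.

Lemma upper_right_slope0_le (phi : R -> R) : continuous phi ->
  (forall t, 0 <= t -> upper_right_slope phi t 0) ->
  forall t, 0 <= t -> phi t <= phi 0.
Proof.
move=> cphi dphi t t0; rewrite leNgt; apply/negP => phit.
move: t0; rewrite le_eqVlt => /predU1P[t_eq0 | t0]; first by move: phit; rewrite -t_eq0 ltxx.
(* Tilt [phi] by a slope [eps] small enough to keep it above [phi 0] at [t]. *)
pose eps := (phi t - phi 0) / (2 * t).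
have eps0 : 0 < eps by rewrite divr_gt0 ?subr_gt0 ?mulr_gt0.
pose psi s := phi s - phi 0 - eps * s.
have cpsi : continuous psi.
  move=> s; apply: cvgB; first by apply: cvgB; [exact: cphi | exact: cvg_cst].
  by apply: cvgM; [exact: cvg_cst | exact: cvg_id].
have psi0 : psi 0 <= 0 by rewrite /psi mulr0 !subrr.
have psit : 0 < psi t.
  suff -> : psi t = (phi t - phi 0) / 2 by rewrite divr_gt0 ?subr_gt0.
  by rewrite /psi /eps; field; rewrite gt_eqF.
have [s0 [/andP[s00 s0t] psis0 psi_pos]] := last_nonpos_point cpsi (ltW t0) psi0 psit.
have : upper_right_slope psi s0 (- eps).
  have [U cU phiU] := dphi s0 s00; exists (fun h => U h - eps).
    suff : U h - eps @[h --> 0^'+] --> 0 - eps by rewrite add0r; apply.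
    by apply: cvgB; [exact: cU | exact: cvg_cst].
  by move=> h h0; have := phiU h h0; rewrite /psi; lra.
move=> /upper_right_slope_lt0; rewrite oppr_lt0 => /(_ eps0) decr.
have [h [[h0 ht] psih]] : exists h, (0 < h /\ h < t - s0) /\ psi (h + s0) < psi s0.
  apply: (@filter_ex _ (0^'+)); near=> h; split; [split|].
  - by near: h; exact: nbhs_right_gt.
  - by near: h; apply: nbhs_right_lt; rewrite subr_gt0.
  - by near: h; exact: decr.
have : 0 < psi (h + s0) by apply: psi_pos; rewrite ltrDr h0 -lerBrDr ltW.
by rewrite ltNge (le_trans (ltW psih) psis0).
Unshelve. all: by end_near.
Qed.

End RightSlope.

Section ExpPrimitive.
Variable R : realType.

Lemma is_derive_expRM (c t : R) :
  is_derive t 1 (fun s => expR (c * s)) (c * expR (c * t)).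
Proof. by apply: trigger_derive; rewrite mulrC [_%:A]mulr1. Qed.

Definition expRM_primitive (c : R) : R -> R :=
  if c == 0 then id else fun s => (expR (c * s) - 1) / c.

Lemma expRM_primitive0 c : expRM_primitive c 0 = 0.
Proof. by rewrite /expRM_primitive; case: eqP => // _; rewrite mulr0 expR0 subrr mul0r. Qed.

Lemma is_derive_expRM_primitive (c t : R) :
  is_derive t 1 (expRM_primitive c) (expR (c * t)).
Proof.
rewrite /expRM_primitive; case: eqP => [->|/eqP c0].
  by rewrite mul0r expR0; exact: is_derive_id.
apply: trigger_derive.
by rewrite scaler0 add0r subr0 [_%:A]mulr1 -[_ *: _]/(_ * _) mulrC mulfK.
Qed.

Lemma continuous_expRM (c : R) : continuous (fun s => expR (c * s)).
Proof. by move=> s; have D := is_derive_expRM c s; exact/derivable1_continuous/ex_derive. Qed.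

Lemma continuous_expRM_primitive (c : R) : continuous (expRM_primitive c).
Proof.
by move=> s; have D := is_derive_expRM_primitive c s; exact/derivable1_continuous/ex_derive.
Qed.

Lemma expRM_primitive_le_invN (c t : R) : c < 0 -> expRM_primitive c t <= `|c|^-1.
Proof.
move=> c0; rewrite /expRM_primitive lt_eqF // ltr0_norm //.
have -> : (expR (c * t) - 1) / c = (1 - expR (c * t)) / - c.
  by rewrite invrN mulrN -mulNr opprB.
by rewrite -[leRHS]mul1r ler_pM2r ?invr_gt0 ?oppr_gt0 // lerBlDr lerDl expR_ge0.
Qed.

Lemma expRM_primitive_le (c t : R) : 0 < c ->
  expRM_primitive c t <= expR (c * t) / c.
Proof.
by move=> c0; rewrite /expRM_primitive gt_eqF // ler_pM2r ?invr_gt0 // lerBlDr lerDl.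
Qed.

End ExpPrimitive.

Section InnerSlope.
Variables (R : realType) (H : normedModType R) (inner : H -> H -> R).
Hypothesis ip : is_inner_product inner.

Lemma upper_right_slope_inner (p q : R -> H) t :
  derivable p t 1 -> derivable q t 1 ->
  upper_right_slope (fun s => inner (p s) (q s)) t
    (inner (derive1 p t) (q t) + inner (p t) (derive1 q t)).
Proof.
move=> dp dq.
exists (fun h => inner (h^-1 *: (p (h + t) - p t)) (q (h + t))
               + inner (p t) (h^-1 *: (q (h + t) - q t))).
  apply: cvgD; apply: (cvg_inner ip); first exact: cvg_right_quotient.
  - exact/cvg_right_shift/derivable1_continuous.
  - exact: cvg_cst.
  - exact: cvg_right_quotient.
move=> h h0; rewrite (inner_increment ip) (innerZl ip) (innerZr ip) mulrDr !mulrA.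
by rewrite mulfV ?gt_eqF // !mul1r.
Qed.

Lemma upper_right_slope_inner_lipschitz (G : H -> H) (k : R) (y q : R -> H) t :
  (forall z w, `|G z - G w| <= k * `|z - w|) ->
  derivable y t 1 -> derivable q t 1 ->
  upper_right_slope (fun s => inner (G (y s)) (q s)) t
    (k * (`|derive1 y t| * `|q t|) + inner (G (y t)) (derive1 q t)).
Proof.
move=> Gk dy dq.
exists (fun h => k * (`|h^-1 *: (y (h + t) - y t)| * `|q (h + t)|)
               + inner (G (y t)) (h^-1 *: (q (h + t) - q t))).
  apply: cvgD; last by apply: (cvg_inner ip); [exact: cvg_cst | exact: cvg_right_quotient].
  apply: cvgM; first exact: cvg_cst.
  apply: cvgM; apply: cvg_norm; first exact: cvg_right_quotient.
  exact/cvg_right_shift/derivable1_continuous.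
move=> h h0; rewrite (inner_increment ip) (innerZr ip) normrZ gtr0_norm ?invr_gt0 //.
set Dy := y (h + t) - y t.
suff -> : h * (k * (h^-1 * `|Dy| * `|q (h + t)|) + h^-1 * inner (G (y t)) (q (h + t) - q t))
    = k * `|Dy| * `|q (h + t)| + inner (G (y t)) (q (h + t) - q t).
  rewrite lerD2r; apply: le_trans (ler_norm _) _; apply: le_trans (ler_inner_norm ip _ _) _.
  exact: ler_wpM2r.
by field; rewrite gt_eqF.
Qed.

End InnerSlope.

Lemma lipschitz_continuous (R : realType) (V W : normedModType R) (f : V -> W) (k : R) :
  (forall y z, `|f y - f z| <= k * `|y - z|) -> continuous f.
Proof.
move=> fk y; apply/cvgrPdist_le => e e0.
have k1 : 0 < `|k| + 1 by rewrite ltr_wpDl.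
near=> z.
have yz : `|y - z| <= e / (`|k| + 1).
  by near: z; apply: cvgr_dist_le; [exact: cvg_id | rewrite divr_gt0].
apply: le_trans (fk y z) _; apply: le_trans (_ : (`|k| + 1) * `|y - z| <= e).
  by apply: ler_wpM2r; rewrite ?normr_ge0 // (le_trans (ler_norm k)) // lerDl.
by rewrite mulrC -ler_pdivlMr.
Unshelve. all: by end_near.
Qed.

Definition heavy_ball_energy (R : realType) (H : normedModType R)
    (inner : H -> H -> R) (F : H -> R) (gradF : H -> H) (Fs a delta : R)
    (x : R -> H) (s : R) : R :=
  a * (F (x s) - Fs) + delta / 2 * inner (derive1 x s) (derive1 x s)
  + inner (gradF (x s)) (derive1 x s).

Section HeavyBall.
Variables (R : realType) (H : normedModType R) (inner : H -> H -> R).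
Variables (F : H -> R) (gradF : H -> H) (L mu alpha a delta Fs : R) (x : R -> H).
Hypotheses (ip : is_inner_product inner)
  (F_diff : forall y, differentiable F y)
  (dF : forall y h, 'd F y h = inner (gradF y) h)
  (gradF_lip : forall y z, `|gradF y - gradF z| <= L * `|y - z|)
  (Fs_le : forall y, Fs <= F y)
  (mu_gt0 : 0 < mu)
  (PL : forall y, F y - Fs <= (2 * mu)^-1 * `|gradF y| ^+ 2)
  (dx : forall t, derivable x t 1)
  (dv : forall t, derivable (derive1 x) t 1)
  (ode : forall t, derive1 (derive1 x) t + alpha *: derive1 x t + gradF (x t) = 0)
  (v0 : derive1 x 0 = 0)
  (a_ge0 : 0 <= a) (delta_ge0 : 0 <= delta)
  (a_damping : a * (alpha - a + delta) <= 2 * mu)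
  (L_damping : L - alpha * delta + delta / 2 * (alpha - a + delta) <= 0).

(* [derivable] unfolds to a product, so [Set Implicit Arguments] would make the
   time argument of these two hypotheses implicit. *)
Arguments dx : clear implicits.
Arguments dv : clear implicits.
Local Notation v := (derive1 x).
Local Notation E := (heavy_ball_energy inner F gradF Fs a delta x).

Lemma is_derive_gap (t : R) :
  is_derive t 1 (fun s => F (x s) - Fs) (inner (gradF (x t)) (v t)).
Proof.
have dFx : differentiable (F \o x) t.
  by apply: differentiable_comp => //; exact/derivable1_diffP.
have Dfx := derivableP (iffRL (derivable1_diffP _ _) dFx).
have -> : inner (gradF (x t)) (v t) = 'D_1 (F \o x) t - 0.
  rewrite subr0 -derive1E (derive1E' dFx) diff_comp ?F_diff //=; last exact/derivable1_diffP.
  by rewrite dF -derive1E' //; exact/derivable1_diffP.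
exact: (is_deriveB Dfx (is_derive_cst Fs t 1)).
Qed.

Lemma continuous_gap : continuous (fun s => F (x s) - Fs).
Proof. by move=> s; have Dg := is_derive_gap s; exact/derivable1_continuous/ex_derive. Qed.

Lemma continuous_energy : continuous E.
Proof.
have cx s : {for s, continuous x} by exact: derivable1_continuous.
have cv s : {for s, continuous v} by exact: derivable1_continuous.
have cg s : {for s, continuous (gradF \o x)}.
  by apply: continuous_comp; [exact: cx | exact: (lipschitz_continuous gradF_lip)].
move=> s; rewrite /heavy_ball_energy; apply: cvgD; first apply: cvgD.
- by apply: cvgM; [exact: cvg_cst | exact: continuous_gap].
- by apply: cvgM; [exact: cvg_cst | exact: (cvg_inner ip (cv s) (cv s))].
- exact: (cvg_inner ip (cg s) (cv s)).
Qed.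

Lemma derive1_velocity (t : R) : derive1 v t = - (alpha *: v t) - gradF (x t).
Proof. by move: (ode t); rewrite -addrA => /eqP; rewrite addr_eq0 => /eqP ->; rewrite opprD. Qed.

Lemma upper_right_slope_energy (t : R) :
  upper_right_slope E t (- ((alpha - a + delta) * E t)).
Proof.
have hdelta : 0 <= delta / 2 by rewrite divr_ge0.
have := upper_right_slopeD
  (upper_right_slopeD
     (upper_right_slopeZ a_ge0 (is_derive_upper_right_slope (is_derive_gap t)))
     (upper_right_slopeZ hdelta (upper_right_slope_inner ip (dv t) (dv t))))
  (upper_right_slope_inner_lipschitz ip gradF_lip (dx t) (dv t)).
apply: upper_right_slope_le.
rewrite /heavy_ball_energy !derive1_velocity (innerC ip (v t)) (innerBl ip) (innerBr ip).
rewrite -scaleNr (innerZl ip) (innerZr ip) (inner_self ip (gradF _)) -expr2 -(inner_self ip (v t)).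
set u := F (x t) - Fs; set N := inner (v t) (v t); set P := inner (gradF (x t)) (v t).
have N_ge0 : 0 <= N by rewrite /N inner_self ?exprn_ge0.
have u_ge0 : 0 <= u by rewrite subr_ge0.
have hN := mulr_le0_ge0 L_damping N_ge0.
have hu := ler_wpM2r u_ge0 a_damping.
have hg : 2 * mu * u <= `|gradF (x t)| ^+ 2.
  by rewrite -ler_pdivlMl ?mulr_gt0 // PL.
lra.
Qed.

Lemma energy_decay (t : R) : 0 <= t ->
  expR ((alpha - a + delta) * t) * E t <= a * (F (x 0) - Fs).
Proof.
move=> t0.
have E0 : E 0 = a * (F (x 0) - Fs).
  by rewrite /heavy_ball_energy v0 (inner0l ip) (innerC ip) (inner0l ip) mulr0 !addr0.
pose phi s := expR ((alpha - a + delta) * s) * E s.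
suff : phi t <= phi 0 by rewrite /phi mulr0 expR0 mul1r E0.
apply: upper_right_slope0_le t0 => [s | s _].
  by apply: cvgM; [exact: continuous_expRM | exact: continuous_energy].
apply: upper_right_slope_le (upper_right_slopeM (fun s => expR_gt0 _)
  (is_derive_expRM _ s) (upper_right_slope_energy s)).
lra.
Qed.

Lemma gap_bound (t : R) : 0 <= t ->
  expR (a * t) * (F (x t) - Fs)
    <= (F (x 0) - Fs) * (1 + a * expRM_primitive (a - (alpha - a + delta)) t).
Proof.
move=> t0; set r := alpha - a + delta; set u0 := F (x 0) - Fs.
pose psi s := expR (a * s) * (F (x s) - Fs) - a * u0 * expRM_primitive (a - r) s.
suff : psi t <= psi 0.
  by rewrite /psi mulr0 expR0 mul1r expRM_primitive0 mulr0 subr0 -/u0; lra.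
apply: upper_right_slope0_le t0 => [s | s s0].
  apply: cvgB; first by apply: cvgM; [exact: continuous_expRM | exact: continuous_gap].
  by apply: cvgM; [exact: cvg_cst | exact: continuous_expRM_primitive].
have sN : upper_right_slope (fun s => - (a * u0 * expRM_primitive (a - r) s)) s
    (- (a * u0 * expR ((a - r) * s))).
  exact/is_derive_upper_right_slope/is_deriveN/is_deriveZ/is_derive_expRM_primitive.
apply: upper_right_slope_le (upper_right_slopeD (upper_right_slopeM (fun s => expR_gt0 _)
  (is_derive_expRM a s) (is_derive_upper_right_slope (is_derive_gap s))) sN).
have decay := energy_decay s0; rewrite -/r -/u0 in decay.
have -> : expR (a * s) = expR ((a - r) * s) * expR (r * s) by rewrite -expRD; congr expR; ring.
have PE : inner (gradF (x s)) (v s) + a * (F (x s) - Fs) <= E s.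
  have : 0 <= delta / 2 * inner (v s) (v s).
    by rewrite (inner_self ip) mulr_ge0 ?divr_ge0 ?exprn_ge0.
  by rewrite /heavy_ball_energy; lra.
have := ler_wpM2l (ltW (mulr_gt0 (expR_gt0 ((a - r) * s)) (expR_gt0 (r * s)))) PE.
have := ler_wpM2l (ltW (expR_gt0 ((a - r) * s))) decay.
lra.
Qed.

End HeavyBall.

Lemma le_Cconst_expR (R : realType) (g u0 a r t : R) :
  0 <= u0 -> 0 <= a -> 0 <= t ->
  expR (a * t) * g <= u0 * (1 + a * expRM_primitive (a - r) t) ->
  g <= Cconst u0 a r t * expR (- (Num.min a r * t)).
Proof.
move=> u0_ge0 a_ge0 t_ge0; rewrite expRN /Cconst.
have [<-|ar] := eqVneq a r.
  by rewrite minxx subrr /expRM_primitive eqxx ler_pdivlMr ?expR_gt0 // mulrC.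
have [alt|rlt] := ltP a r.
  rewrite /= ler_pdivlMr ?expR_gt0 // mulrC => bound.
  apply: le_trans bound _; apply: ler_wpM2l => //; rewrite lerD2l.
  by apply: ler_wpM2l => //; rewrite expRM_primitive_le_invN ?subr_lt0.
have {}rlt : r < a by rewrite lt_neqAle rlt eq_sym ar.
have c0 : 0 < a - r by rewrite subr_gt0.
have ec1 : 1 <= expR ((a - r) * t) by rewrite -expR0 ler_expR mulr_ge0 // ltW.
have -> : expR (a * t) = expR ((a - r) * t) * expR (r * t) by rewrite -expRD; congr expR; ring.
rewrite /= gtr0_norm // ler_pdivlMr ?expR_gt0 // => bound.
rewrite -(ler_pM2l (expR_gt0 ((a - r) * t))).
have : u0 * (a * expRM_primitive (a - r) t) <= u0 * (a * (expR ((a - r) * t) / (a - r))).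
  by do 2!apply: ler_wpM2l => //; exact: expRM_primitive_le.
have := ler_wpM2r u0_ge0 ec1; rewrite mul1r.
lra.
Qed.

Theorem lemma6p3 (R : realType) (H : completeNormedModType R)
  (inner : H -> H -> R) (F : H -> R) (gradF : H -> H)
  (L mu alpha a delta Fs : R) (x0 : H) (x : R -> H) :
  is_inner_product inner ->
  (forall y, differentiable F y) ->
  (forall y h, 'd F y h = inner (gradF y) h) ->
  (forall y z, `|gradF y - gradF z| <= L * `|y - z|) ->
  (exists xs, F xs = Fs) -> (forall y, Fs <= F y) ->
  0 < mu ->
  (forall y, F y - Fs <= (2 * mu)^-1 * `|gradF y| ^+ 2) ->
  0 < alpha ->
  (forall t, derivable x t 1) ->
  (forall t, derivable (derive1 x) t 1) ->
  (forall t, derive1 (derive1 x) t + alpha *: derive1 x t + gradF (x t) = 0) ->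
  x 0 = x0 -> derive1 x 0 = 0 ->
  0 <= a -> 0 <= delta ->
  0 < alpha - a + delta ->
  a * (alpha - a + delta) <= 2 * mu ->
  L - alpha * delta + delta / 2 * (alpha - a + delta) <= 0 ->
  forall t, 0 < t ->
    F (x t) - Fs <=
      Cconst (F x0 - Fs) a (alpha - a + delta) t
      * expR (- (Num.min a (alpha - a + delta) * t)).
Proof.
move=> ip F_diff dF gradF_lip _ Fs_le mu_gt0 PL _ dx dv ode <- v0 a_ge0 delta_ge0 _
  a_damping L_damping t t_gt0.
have bound := gap_bound ip F_diff dF gradF_lip Fs_le mu_gt0 PL dx dv ode v0
  a_ge0 delta_ge0 a_damping L_damping (ltW t_gt0).
by apply: le_Cconst_expR bound => //; [rewrite subr_ge0 | exact: ltW].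
Qed.
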